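(* Let $G$ be a $k$-uniform tight cycle (an $s$-cycle with $s=k-1$), with $m=n$ edges and vertices. Then $G$ is regular. Assume further that $k$ is even and write $k=2^{t_0}(2l_0+1)$ with nonnegative integers $t_0,l_0$. Then $G$ is odd-bipartite if and only if $m=n$ is a multiple of $2^{t_0}$.
   Context: A $k$-uniform $s$-cycle with $m$ edges has vertex set $\mathbb{Z}_n$, $n=m(k-s)$ (vertex $n+i$ identified with $i$), and edges $e_j=\{j(k-s)+1,\ldots,j(k-s)+k\}$, $j=0,\ldots,m-1$; it is assumed that $n\ge 2k-s$ (for $s=k-1$: $n=m\ge k+1$). A hypergraph is regular if all vertex degrees are equal. A $k$-uniform hypergraph with $k$ even and vertex set $V$ is odd-bipartite if either it has no edges or there is a partition $V=V_1\cup V_2$ with $V_1,V_2\ne\emptyset$ such that every edge intersects $V_1$ in an odd number of vertices. *)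

From mathcomp Require Import all_boot.
Set Implicit Arguments. Unset Strict Implicit. Unset Printing Implicit Defensive.

Definition hdeg (n m : nat) (E : 'I_m -> {set 'I_n}) (v : 'I_n) : nat :=
  #|[set j : 'I_m | v \in E j]|.

Definition hregular (n m : nat) (E : 'I_m -> {set 'I_n}) : Prop :=
  forall u v : 'I_n, hdeg E u = hdeg E v.

Definition odd_bipartite (n m : nat) (E : 'I_m -> {set 'I_n}) : Prop :=
  m = 0 \/
  exists V1 : {set 'I_n}, V1 != set0 /\ ~: V1 != set0 /\
    forall j : 'I_m, odd #|E j :&: V1|.

(* k-uniform s-cycle with m edges: vertex set Z_n, n = m(k-s), represented
   by 'I_n (vertex n+i identified with i, i.e. vertices taken mod n);
   edge e_j = {j(k-s)+1, ..., j(k-s)+k} (mod n). *)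
Definition scycle (k s m : nat) (j : 'I_m) : {set 'I_(m * (k - s))} :=
  [set v : 'I_(m * (k - s)) |
     [exists i : 'I_k, (j * (k - s) + i.+1) %% (m * (k - s)) == val v]].
Arguments scycle k s m j : clear implicits.

From mathcomp Require Import all_boot.

(* Identify a vertex class V1 with its indicator x on Z_m.  Edge j of the tight
   cycle is the window {j+1, ..., j+k}, so V1 is admissible iff every window of
   k consecutive values of x has odd sum.  Two consecutive windows differ in
   x a and x (a + k) only, so x is k-periodic, hence g-periodic for
   g = gcd(k, m), and each window sum is (k/g) times the sum over one period:
   k/g must be odd.  Conversely, when k/g is odd the multiples of g meet every
   window in exactly k/g vertices.  For k = 2^t0 (2 l0 + 1), k/g is odd iff
   2^t0 divides g, i.e. iff 2^t0 divides m. *)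

Set Implicit Arguments.
Unset Strict Implicit.
Unset Printing Implicit Defensive.

Definition periodic (T : Type) (f : nat -> T) (p : nat) := forall y, f (y + p) = f y.

Lemma periodicM T (f : nat -> T) p c : periodic f p -> periodic f (c * p).
Proof.
move=> fp; elim: c => [|c IHc] y; first by rewrite mul0n addn0.
by rewrite mulSn addnA IHc fp.
Qed.

Lemma periodic_gcdn T (f : nat -> T) p q :
  0 < q -> periodic f p -> periodic f q -> periodic f (gcdn p q).
Proof.
move=> q_gt0 fp fq y; have [a _ /dvdnP[b def_aq]] := Bezoutl p q_gt0.
rewrite gcdnC in def_aq.
by rewrite -(periodicM a fp) -addnA def_aq (periodicM b fq).
Qed.

Lemma sum_periodic_shift (F : nat -> nat) g a : periodic F g ->
  \sum_(i < g) F (a + i) = \sum_(i < g) F i.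
Proof.
case: g => [|g] Fg; first by rewrite !big_ord0.
elim: a => [|a <-]; first by apply: eq_bigr => i _; rewrite add0n.
rewrite big_ord_recr big_ord_recl /= addn0 addnC addSnnS Fg.
by congr (_ + _); apply: eq_bigr => i _; rewrite /= addSnnS.
Qed.

Lemma sum_periodic_blocks (F : nat -> nat) g N a : periodic F g -> g %| N ->
  \sum_(i < N) F (a + i) = N %/ g * \sum_(i < g) F (a + i).
Proof.
move=> Fg /dvdnP[q ->]; case: g Fg => [|g] Fg; first by rewrite muln0 big_ord0.
rewrite mulnK //; elim: q => [|q IHq]; first by rewrite mul0n big_ord0.
rewrite mulSn big_split_ord /= mulSn -IHq; congr (_ + _).
by apply: eq_bigr => i _; rewrite /= addnCA addnA -addnA addnC Fg.
Qed.

Lemma sum_dvdn_window g a : 0 < g -> \sum_(i < g) (g %| a + i) = 1.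
Proof.
move=> g_gt0; rewrite (sum_periodic_shift (F := fun y => g %| y)); last first.
  by move=> y; rewrite dvdn_addl.
case: g g_gt0 => // g _; rewrite big_ord_recl dvdn0 big1 // => i _.
by rewrite /= gtnNdvd // ltnS.
Qed.

Lemma periodic_odd_windows (x : nat -> bool) k :
  (forall a, odd (\sum_(i < k) x (a + i))) -> periodic x k.
Proof.
case: k => [|k] odd_win a; first by have := odd_win 0; rewrite big_ord0.
have := odd_win a.+1; have := odd_win a.
rewrite big_ord_recl big_ord_recr /= !addn0 addnS.
under eq_bigr => i _ do rewrite /bump leq0n add1n addnS -addSn.
rewrite -addSn !oddD.
by case: (odd (\sum_(i < k) _)); case: (x a); case: (x (a.+1 + k)).
Qed.

Lemma odd_windows_odd_quotient (x : nat -> bool) k m :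
  0 < m -> periodic x m -> (forall a, odd (\sum_(i < k) x (a + i))) ->
  odd (k %/ gcdn k m).
Proof.
move=> m_gt0 xm odd_win; set g := gcdn k m.
have xg : periodic (fun y => nat_of_bool (x y)) g.
  by move=> y; rewrite (periodic_gcdn m_gt0 (periodic_odd_windows odd_win) xm).
have := odd_win 0.
by rewrite (sum_periodic_blocks _ xg (dvdn_gcdl k m)) oddM => /andP[].
Qed.

Lemma odd_windows_dvdn_gcdn k m a : odd (k %/ gcdn k m) ->
  odd (\sum_(i < k) (gcdn k m %| a + i)).
Proof.
set g := gcdn k m => odd_kg.
have g_gt0 : 0 < g by case: g odd_kg => [|g]; rewrite ?divn0.
have dvdn_g_periodic : periodic (fun y => nat_of_bool (g %| y)) g.
  by move=> y; rewrite dvdn_addl.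
rewrite (sum_periodic_blocks _ dvdn_g_periodic (dvdn_gcdl k m)).
by rewrite sum_dvdn_window // muln1.
Qed.

Lemma dvdn_coprime_quotient a d k :
  d %| k -> coprime a (k %/ d) -> a %| k -> a %| d.
Proof. by move=> dk co; rewrite -(Gauss_dvdl d co) mulnC divnK. Qed.

Lemma odd_quotient a b d : 0 < a -> odd b -> a %| d -> d %| a * b ->
  odd (a * b %/ d).
Proof.
move=> a_gt0 odd_b ad dab; set e := a * b %/ d.
have e_da : e * (d %/ a) = b.
  apply/eqP; rewrite -(eqn_pmul2r a_gt0) -mulnA divnK // divnK //.
  by rewrite mulnC.
by move: odd_b; rewrite -e_da oddM => /andP[].
Qed.

Lemma odd_quotient_gcdn_pow2 t l k m : k = 2 ^ t * (2 * l + 1) ->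
  odd (k %/ gcdn k m) = (2 ^ t %| m).
Proof.
move=> def_k; have t_k : 2 ^ t %| k by rewrite def_k dvdn_mulr.
apply/idP/idP => [odd_kg | t_m].
  apply: dvdn_trans (dvdn_gcdr k m); apply: dvdn_coprime_quotient (dvdn_gcdl k m) _ t_k.
  by rewrite coprimeXl // coprime2n.
rewrite def_k odd_quotient -?def_k ?expn_gt0 ?dvdn_gcdl //; last first.
  by rewrite dvdn_gcd t_k.
by rewrite addn1 /= oddM.
Qed.

Lemma ordS_invariant_const T n (f : 'I_n -> T) :
  (forall v, f (ordS v) = f v) -> forall u v, f u = f v.
Proof.
move=> fS u v.
have iter_ordS r (w : 'I_n) : val (iter r (@ordS n) w) = (w + r) %% n.
  elim: r => [|r IHr] /=; first by rewrite addn0 modn_small.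
  by rewrite IHr addnS -addn1 modnDml addn1.
have f_iter r w : f (iter r (@ordS n) w) = f w by elim: r => //= r <-.
rewrite -(f_iter (v + n - u) u); congr f; apply: val_inj.
rewrite iter_ordS addnC subnK; last by rewrite ltnW // ltn_addl.
by rewrite modnDr modn_small.
Qed.

Section TightCycle.

Variables k s m : nat.
Hypothesis tight : k - s = 1.
Hypothesis k_lt_m : k < m.

Local Notation n := (m * (k - s)).
Local Notation E := (scycle k s m).

Lemma m_gt0 : 0 < m.
Proof. exact: leq_ltn_trans (leq0n k) k_lt_m. Qed.

Lemma n_gt0 : 0 < n.
Proof. by rewrite tight muln1 m_gt0. Qed.

Definition vertex (y : nat) : 'I_n := Ordinal (ltn_pmod y n_gt0).

Lemma val_vertex y : val (vertex y) = y %% m.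
Proof. by rewrite /= tight muln1. Qed.

Lemma vertex_mod y : vertex (y %% m) = vertex y.
Proof. by apply: val_inj; rewrite !val_vertex modn_mod. Qed.

Lemma scycleE (j : 'I_m) : E j = [set vertex (j + i.+1) | i : 'I_k].
Proof.
have modE y : (j * (k - s) + y) %% n = val (vertex (j + y)).
  by rewrite val_vertex tight !muln1.
apply/setP => v; rewrite inE; apply/existsP/imsetP => -[i].
  by rewrite modE => /eqP/val_inj def_v; exists i.
by move=> _ ->; exists i; rewrite modE.
Qed.

Lemma vertex_window_inj (j : 'I_m) : injective (fun i : 'I_k => vertex (j + i.+1)).
Proof.
move=> i1 i2 /(congr1 val); rewrite !val_vertex => /eqP; rewrite eqn_modDl.
rewrite !modn_small ?(leq_ltn_trans (ltn_ord _) k_lt_m) // => /eqP[].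
exact: val_inj.
Qed.

Lemma card_scycleI (j : 'I_m) (V1 : {set 'I_n}) :
  #|E j :&: V1| = \sum_(i < k) (vertex (j + i.+1) \in V1).
Proof.
have -> : E j :&: V1 =
    [set vertex (j + i.+1) | i : 'I_k in [set i : 'I_k | vertex (j + i.+1) \in V1]].
  apply/setP => v; rewrite scycleE inE; apply/andP/imsetP => [[/imsetP[i _ ->]]|[i]].
    by exists i; rewrite ?inE.
  by rewrite inE => V1i ->; split=> //; apply: imset_f.
rewrite card_imset; last exact: vertex_window_inj.
by rewrite -sum1dep_card big_mkcond.
Qed.

Lemma ordS_vertex y : ordS (vertex y) = vertex y.+1.
Proof.
apply: val_inj; rewrite val_vertex -addn1 -modnDml addn1 -val_vertex /=.
by move: (val (vertex y)) => w; rewrite tight muln1.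
Qed.

Lemma scycle_ordS (j : 'I_m) : E (ordS j) = @ordS n @: E j.
Proof.
rewrite !scycleE -imset_comp; apply: eq_imset => i /=.
by rewrite ordS_vertex -vertex_mod modnDml vertex_mod addSn.
Qed.

Lemma hregular_tight : hregular E.
Proof.
apply: ordS_invariant_const => v; rewrite /hdeg -(card_preimset _ (@ordS_inj m)).
apply: eq_card => j; rewrite inE [LHS]inE [LHS]inE scycle_ordS.
by rewrite mem_imset //; apply: ordS_inj.
Qed.

Lemma vertexDm y : vertex (y + m) = vertex y.
Proof. by rewrite -vertex_mod modnDr vertex_mod. Qed.

Lemma odd_windows_of_odd_edges (V1 : {set 'I_n}) :
  (forall j, odd #|E j :&: V1|) -> forall a, odd (\sum_(i < k) (vertex (a + i) \in V1)).
Proof.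
move=> odd_edges a; have := odd_edges (Ordinal (ltn_pmod (a + m.-1) m_gt0)).
rewrite card_scycleI; congr (odd _); apply: eq_bigr => i _.
rewrite /= -vertex_mod modnDml vertex_mod.
by rewrite addnAC addnS addSn -addnS prednK ?m_gt0 // vertexDm.
Qed.

Lemma odd_quotient_of_odd_bipartite : odd_bipartite E -> odd (k %/ gcdn k m).
Proof.
case=> [m0 | [V1 [_ [_ odd_edges]]]]; first by move: k_lt_m; rewrite m0.
apply: (@odd_windows_odd_quotient (fun a => vertex a \in V1) _ _ m_gt0).
  by move=> y; rewrite vertexDm.
exact: odd_windows_of_odd_edges.
Qed.

Lemma odd_bipartite_of_odd_quotient :
  ~~ odd k -> odd (k %/ gcdn k m) -> odd_bipartite E.
Proof.
set g := gcdn k m => even_k odd_kg; right; exists [set v : 'I_n | g %| v].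
have g_gt1 : 1 < g.
  by case: g odd_kg => [|[|g]] //; rewrite ?divn0 ?divn1 (negbTE even_k).
have in_V1 y : (vertex y \in [set v : 'I_n | g %| v]) = (g %| y).
  by rewrite inE val_vertex /dvdn modn_dvdm // dvdn_gcdr.
split; first by apply/set0Pn; exists (vertex 0); rewrite in_V1 dvdn0.
split; first by apply/set0Pn; exists (vertex 1); rewrite inE in_V1 gtnNdvd.
move=> j; rewrite card_scycleI.
under eq_bigr do rewrite in_V1 -addSnnS.
exact: odd_windows_dvdn_gcdn.
Qed.

End TightCycle.

Theorem corollary4p2 (k m : nat) (hm : k.+1 <= m) :
  hregular (scycle k k.-1 m) /\
  (~~ odd k -> forall t0 l0 : nat, k = 2 ^ t0 * (2 * l0 + 1) ->
     (odd_bipartite (scycle k k.-1 m) <-> 2 ^ t0 %| m)).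
Proof.
case: k hm => [|k] hm.
  split=> [[u u_lt] v | _ t0 l0 /eqP]; first by exfalso; move: u_lt; rewrite muln0.
  by rewrite eq_sym muln_eq0 expn_eq0 addn1.
have tight : k.+1 - k.+1.-1 = 1 by rewrite subSnn.
split=> [|even_k t0 l0 def_k]; first exact: hregular_tight.
rewrite -(odd_quotient_gcdn_pow2 m def_k).
split=> [|odd_kg]; first exact: odd_quotient_of_odd_bipartite.
exact: odd_bipartite_of_odd_quotient.
Qed.
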